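(* Let $a_1,a_2,a_3,a_4$ be constants and define $$Q(x,y,z)=yz(x-1)(x-y)(x-z)a_1+xz(y-1)(y-x)(y-z)a_2+xy(z-1)(z-x)(z-y)a_3+xyz(x-1)(y-1)(z-1)a_4.$$ Let $c_1$ be a constant and $x_1,y_1,z_1$ nonzero constants with $Q(x_1,y_1,z_1)=0$. Then $\tau_{k,l,m}=1+c_1x_1^ky_1^lz_1^m$ satisfies, for all $(k,l,m)\in\mathbb{Z}^3$, the dual AKP equation $$\begin{aligned}0=&\,a_1\big(\tau_{k-1,l+1,m+1}\tau_{k+1,l,m}\tau_{k+1,l,m+1}\tau_{k+1,l+1,m}-\tau_{k,l,m+1}\tau_{k,l+1,m}\tau_{k,l+1,m+1}\tau_{k+2,l,m}\big)\\&+a_2\big(\tau_{k,l+1,m}\tau_{k,l+1,m+1}\tau_{k+1,l-1,m+1}\tau_{k+1,l+1,m}-\tau_{k,l,m+1}\tau_{k,l+2,m}\tau_{k+1,l,m}\tau_{k+1,l,m+1}\big)\\&+a_3\big(\tau_{k,l,m+1}\tau_{k,l+1,m+1}\tau_{k+1,l,m+1}\tau_{k+1,l+1,m-1}-\tau_{k,l,m+2}\tau_{k,l+1,m}\tau_{k+1,l,m}\tau_{k+1,l+1,m}\big)\\&+a_4\big(\tau_{k,l,m}\tau_{k,l+1,m+1}\tau_{k+1,l,m+1}\tau_{k+1,l+1,m}-\tau_{k,l,m+1}\tau_{k,l+1,m}\tau_{k+1,l,m}\tau_{k+1,l+1,m+1}\big).\end{aligned}$$ *)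

From mathcomp Require Import all_boot all_algebra.
Set Implicit Arguments. Unset Strict Implicit. Unset Printing Implicit Defensive.
Import GRing.Theory.
Local Open Scope ring_scope.

Definition Qpoly (F : fieldType) (a1 a2 a3 a4 x y z : F) : F :=
  y * z * (x - 1) * (x - y) * (x - z) * a1
  + x * z * (y - 1) * (y - x) * (y - z) * a2
  + x * y * (z - 1) * (z - x) * (z - y) * a3
  + x * y * z * (x - 1) * (y - 1) * (z - 1) * a4.

Definition tau (F : fieldType) (c1 x1 y1 z1 : F) (k l m : int) : F :=
  1 + c1 * x1 ^ k * y1 ^ l * z1 ^ m.

Definition dualAKP (F : fieldType) (a1 a2 a3 a4 : F) (t : int -> int -> int -> F)
  (k l m : int) : F :=
  a1 * (t (k-1) (l+1) (m+1) * t (k+1) l m * t (k+1) l (m+1) * t (k+1) (l+1) m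
        - t k l (m+1) * t k (l+1) m * t k (l+1) (m+1) * t (k+2) l m)
  + a2 * (t k (l+1) m * t k (l+1) (m+1) * t (k+1) (l-1) (m+1) * t (k+1) (l+1) m
        - t k l (m+1) * t k (l+2) m * t (k+1) l m * t (k+1) l (m+1))
  + a3 * (t k l (m+1) * t k (l+1) (m+1) * t (k+1) l (m+1) * t (k+1) (l+1) (m-1)
        - t k l (m+2) * t k (l+1) m * t (k+1) l m * t (k+1) (l+1) m)
  + a4 * (t k l m * t k (l+1) (m+1) * t (k+1) l (m+1) * t (k+1) (l+1) m
        - t k l (m+1) * t k (l+1) m * t (k+1) l m * t (k+1) (l+1) (m+1)).

From mathcomp Require Import all_boot all_algebra.
From mathcomp Require Import ring.
Local Open Scope ring_scope.
Import GRing.Theory.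
Set Implicit Arguments. Unset Strict Implicit.

(* The dual AKP equation is invariant under lattice translations, and a
   translate of the one-soliton tau is again a one-soliton whose amplitude
   c1 x1^k y1^l z1^m absorbs the shift.  It therefore suffices to check the
   equation at the origin, where, for amplitude c, x1 y1 z1 times the dual AKP
   expression factors as c * Q(x1, y1, z1) * (c^2 x1 y1 z1 - 1). *)

Lemma dualAKP_translate (F : fieldType) (a1 a2 a3 a4 : F)
    (t t' : int -> int -> int -> F) (k l m : int) :
  (forall i j n, t (k + i) (l + j) (m + n) = t' i j n) ->
  dualAKP a1 a2 a3 a4 t k l m = dualAKP a1 a2 a3 a4 t' 0 0 0.
Proof. by move=> tt'; rewrite /dualAKP -!tt' !add0r !addr0. Qed.

Lemma tau_translate (F : fieldType) (c x y z : F) (k l m : int) :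
  x != 0 -> y != 0 -> z != 0 ->
  forall i j n, tau c x y z (k + i) (l + j) (m + n)
                = tau (c * x ^ k * y ^ l * z ^ m) x y z i j n.
Proof. by move=> x0 y0 z0 i j n; rewrite /tau !expfzDr //; ring. Qed.

Lemma dualAKP_tau_origin (F : fieldType) (a1 a2 a3 a4 c x y z : F) :
  x != 0 -> y != 0 -> z != 0 ->
  x * y * z * dualAKP a1 a2 a3 a4 (tau c x y z) 0 0 0
  = c * Qpoly a1 a2 a3 a4 x y z * (c ^+ 2 * (x * y * z) - 1).
Proof.
move=> x0 y0 z0; rewrite /dualAKP /tau !add0r !expr0z !expr1z !exprN1.
have sq (w : F) : w ^ (2%:Z) = w * w by rewrite -exprnP expr2.
rewrite !sq /Qpoly; field; rewrite ?x0 ?y0 ?z0 //.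
Qed.

Theorem mainTheorem2 (F : fieldType) (a1 a2 a3 a4 c1 x1 y1 z1 : F) :
  x1 != 0 -> y1 != 0 -> z1 != 0 ->
  Qpoly a1 a2 a3 a4 x1 y1 z1 = 0 ->
  forall k l m : int, dualAKP a1 a2 a3 a4 (tau c1 x1 y1 z1) k l m = 0.
Proof.
move=> x0 y0 z0 Q0 k l m.
rewrite (dualAKP_translate _ _ _ _ (tau_translate c1 k l m x0 y0 z0)).
have xyz0 : x1 * y1 * z1 != 0 by rewrite !mulf_neq0.
apply: (mulfI xyz0).
by rewrite dualAKP_tau_origin // Q0 mulr0 !mul0r mulr0.
Qed.
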